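(* Let $G$ be a finite group, $K$ an idempotent semifield, and $V$ an indecomposable representation of $G$ over $K$. Let $K[G]$ be the regular representation. Then there is a subgroup $H\subseteq G$ such that $V$ is isomorphic (as a representation) to the quotient of $K[G]$ by the $K[G]$-module congruence generated by $g\sim gh$ for all $g\in G$, $h\in H$.
   Context: All semirings are commutative. A semifield is a semiring whose nonzero elements form a multiplicative group; idempotent means $a+a=a$ for all $a$. A representation of $G$ over $K$ is a $K$-linear action of $G$ on a free module $K^n$ (equivalently a $K[G]$-module that is free of finite rank over $K$); it is indecomposable if it is not a direct sum of two nontrivial $G$-stable submodules. The regular representation is the group semiring $K[G]$ viewed as a module over itself. *)

From HB Require Import structures.
From mathcomp Require Import all_boot all_order all_algebra all_fingroup.
Set Implicit Arguments. Unset Strict Implicit. Unset Printing Implicit Defensive.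
Import GRing.Theory.
Local Open Scope ring_scope.

Definition idempotent_semiring (K : comNzSemiRingType) : Prop :=
  forall a : K, a + a = a.
(* nonzero elements form a multiplicative group (commutativity, 1 given) *)
Definition semifield (K : comNzSemiRingType) : Prop :=
  forall x : K, x != 0 -> exists y : K, x * y = 1.

Definition is_rep (K : comNzSemiRingType) (gT : finGroupType) (n : nat)
  (rho : gT -> 'M[K]_n) : Prop :=
  rho 1%g = 1%:M /\ forall g h : gT, rho (g * h)%g = rho g *m rho h.

Definition submod (K : comNzSemiRingType) (n : nat) (W : 'cV[K]_n -> Prop) : Prop :=
  [/\ W 0, (forall v w, W v -> W w -> W (v + w)) &
      (forall (c : K) v, W v -> W (c *: v))].

Definition Gstable (K : comNzSemiRingType) (gT : finGroupType) (n : nat)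
  (rho : gT -> 'M[K]_n) (W : 'cV[K]_n -> Prop) : Prop :=
  forall g v, W v -> W (rho g *m v).

Definition nontrivial_sub (K : comNzSemiRingType) (n : nat) (W : 'cV[K]_n -> Prop) :=
  exists v, W v /\ v <> 0.

Definition direct_sum (K : comNzSemiRingType) (n : nat) (W1 W2 : 'cV[K]_n -> Prop) :=
  forall v, exists w, [/\ W1 w.1, W2 w.2, v = w.1 + w.2 &
     forall w', W1 w'.1 -> W2 w'.2 -> v = w'.1 + w'.2 -> w' = w].

Definition indecomposable (K : comNzSemiRingType) (gT : finGroupType) (n : nat)
  (rho : gT -> 'M[K]_n) : Prop :=
  (0 < n)%N /\
  ~ (exists W1 W2 : 'cV[K]_n -> Prop,
       [/\ submod W1 /\ submod W2, Gstable rho W1 /\ Gstable rho W2,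
           nontrivial_sub W1 /\ nontrivial_sub W2 & direct_sum W1 W2]).

Section GroupSemiring.
Variables (K : comNzSemiRingType) (gT : finGroupType).
Definition KG := {ffun gT -> K}.
Definition kg_zero : KG := [ffun _ => 0].
Definition kg_add (x y : KG) : KG := [ffun k => x k + y k].
Definition kg_scale (c : K) (x : KG) : KG := [ffun k => c * x k].
Definition kg_delta (g : gT) : KG := [ffun k => if k == g then 1 else 0].
Definition kg_mul (x y : KG) : KG := [ffun k => \sum_(g : gT) x g * y (g^-1 * k)%g].
Definition kg_act (g : gT) (x : KG) : KG := [ffun k => x (g^-1 * k)%g].

Definition kg_congr (R : KG -> KG -> Prop) : Prop :=
  [/\ (forall x, R x x), (forall x y, R x y -> R y x),
      (forall x y z, R x y -> R y z -> R x z),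
      (forall x y z, R x y -> R (kg_add x z) (kg_add y z)) &
      (forall x y z, R x y -> R (kg_mul z x) (kg_mul z y))].

Definition coset_congr (H : {group gT}) (x y : KG) : Prop :=
  forall R : KG -> KG -> Prop, kg_congr R ->
    (forall g h, h \in H -> R (kg_delta g) (kg_delta (g * h)%g)) -> R x y.
End GroupSemiring.

From HB Require Import structures.
From mathcomp Require Import all_boot all_order all_algebra all_fingroup.
Set Implicit Arguments. Unset Strict Implicit. Unset Printing Implicit Defensive.
Import GRing.Theory.
Local Open Scope ring_scope.

(* An idempotent semifield has no zero divisors and no nonzero sums equal to 0,
   so every invertible matrix over it is monomial: each rho g permutes the
   coordinate lines of K^n.  Indecomposability makes this permutation action
   transitive, so x |-> sum_g x(g) rho(g) e_i0 maps K[G] onto K^n.  If g and k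
   send e_i0 to the same line, then rho(g^-1 k) e_i0 = c e_i0 with c^m = 1 for
   m the order of g^-1 k, and c^m = 1 forces c = 1 in an idempotent semifield;
   hence the fibres of g |-> rho(g) e_i0 are the cosets of the stabiliser H of
   e_i0.  Two elements of K[G] thus have the same image iff they carry the same
   total mass on every coset gH, i.e. iff the congruence g ~ gh relates them. *)

Section IdempotentSemifield.
Variable K : comNzSemiRingType.
Hypotheses (Kidem : idempotent_semiring K) (Ksf : semifield K).

Lemma idem_addr_eq0 (a b : K) : a + b = 0 -> a = 0.
Proof. by move=> ab0; rewrite -[a]addr0 -ab0 addrA Kidem. Qed.

Lemma idem_sumr_neq0 (I : finType) (P : pred I) (F : I -> K) j :
  P j -> F j != 0 -> \sum_(i | P i) F i != 0.
Proof.
by move=> Pj; apply: contra; rewrite (bigD1 j) //= => /eqP/idem_addr_eq0 ->.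
Qed.

Lemma sf_mulIf (c a b : K) : c != 0 -> a * c = b * c -> a = b.
Proof.
by move=> /Ksf[d cd1] acbc; rewrite -[a]mulr1 -[b]mulr1 -cd1 !mulrA acbc.
Qed.

Lemma sf_mulf_neq0 (a b : K) : a != 0 -> b != 0 -> a * b != 0.
Proof.
move=> a0 b0; apply: contraNneq a0 => ab0.
by apply/eqP/(sf_mulIf b0); rewrite ab0 mul0r.
Qed.

(* Multiplying s = 1 + c + ... + c^(m-1) by c permutes its terms, and s != 0. *)
Lemma idem_expr_eq1 (c : K) m : (0 < m)%N -> c ^+ m = 1 -> c = 1.
Proof.
case: m => // m _ cm1.
have s0 : \sum_(k < m.+1) c ^+ k != 0.
  by apply: (@idem_sumr_neq0 _ _ _ ord0); rewrite // expr0 oner_neq0.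
apply: (sf_mulIf s0); rewrite mul1r mulr_sumr.
rewrite big_ord_recr /= big_ord_recl /= expr0 -exprS cm1 addrC.
by congr (_ + _); apply: eq_bigr => i _; rewrite -exprS.
Qed.

End IdempotentSemifield.

Lemma sumr_neq0_exists (V : nmodType) (I : finType) (F : I -> V) :
  \sum_i F i != 0 -> exists i, F i != 0.
Proof.
move=> s0; apply/existsP; apply: contraNT s0 => /existsPn F0.
by rewrite big1 // => i _; apply/eqP/negbNE.
Qed.

Lemma mulmx_neq0_witness (R : pzSemiRingType) m p q
    (A : 'M[R]_(m, p)) (B : 'M[R]_(p, q)) i j :
  (A *m B) i j != 0 -> exists2 k, A i k != 0 & B k j != 0.
Proof.
rewrite mxE => /sumr_neq0_exists[k AB0]; exists k.
  by apply: contraNneq AB0 => ->; rewrite mul0r.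
by apply: contraNneq AB0 => ->; rewrite mulr0.
Qed.

Lemma scalar_mx1_neq0 (R : pzSemiRingType) n (i j : 'I_n) :
  (1%:M : 'M[R]_n) i j != 0 -> i = j.
Proof. by rewrite mxE; case: (eqVneq i j) => // _; rewrite eqxx. Qed.

Section MonomialUnits.
Variable K : comNzSemiRingType.
Hypotheses (Kidem : idempotent_semiring K) (Ksf : semifield K).

Lemma mulmx_neq0 m p q (A : 'M[K]_(m, p)) (B : 'M[K]_(p, q)) i k j :
  A i k != 0 -> B k j != 0 -> (A *m B) i j != 0.
Proof.
by move=> Aik Bkj; rewrite mxE (@idem_sumr_neq0 _ Kidem _ _ _ k) ?sf_mulf_neq0.
Qed.

Variables (n : nat) (A B : 'M[K]_n).
Hypotheses (AB1 : A *m B = 1%:M) (BA1 : B *m A = 1%:M).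

Lemma unitmx_col_neq0 j : exists i, A i j != 0.
Proof.
have : (B *m A) j j != 0 by rewrite BA1 mxE eqxx oner_neq0.
by case/mulmx_neq0_witness => i _ Aij; exists i.
Qed.

Lemma unitmx_inv_neq0 i j : A i j != 0 -> B j i != 0.
Proof.
move=> Aij; have : (B *m A) j j != 0 by rewrite BA1 mxE eqxx oner_neq0.
case/mulmx_neq0_witness => k Bjk _.
by have := mulmx_neq0 Aij Bjk; rewrite AB1 => /scalar_mx1_neq0 ->.
Qed.

Lemma unitmx_col_uniq i k j : A i j != 0 -> A k j != 0 -> i = k.
Proof.
move=> Aij Akj; have := mulmx_neq0 Akj (unitmx_inv_neq0 Aij).
by rewrite AB1 => /scalar_mx1_neq0.
Qed.

Lemma unitmx_colE i j : A i j != 0 -> col j A = A i j *: delta_mx i 0.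
Proof.
move=> Aij; apply/matrixP => k l; rewrite (ord1 l) !mxE eqxx andbT.
have [->|ki] := eqVneq k i; first by rewrite mulr1.
by rewrite mulr0; apply: contraNeq ki => /(unitmx_col_uniq Aij) ->.
Qed.

End MonomialUnits.

Section Supports.
Variables (K : comNzSemiRingType) (n : nat).
Implicit Types (S : {set 'I_n}) (i : 'I_n).

Definition supported S (v : 'cV[K]_n) : Prop :=
  forall i, i \notin S -> v i 0 = 0.

Lemma submod_supported S : submod (supported S).
Proof.
by split=> [i _|v w vS wS i iS|c v vS i iS]; rewrite mxE ?vS ?wS ?addr0 ?mulr0.
Qed.

Lemma direct_sum_supported S : direct_sum (supported S) (supported (~: S)).
Proof.
move=> v; pose vS := \col_i (if i \in S then v i 0 else 0).
pose vC := \col_i (if i \in S then 0 else v i 0).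
exists (vS, vC); split=> /=.
- by move=> i /negbTE iS; rewrite mxE iS.
- by move=> i; rewrite in_setC negbK => iS; rewrite mxE iS.
- apply/matrixP => i j; rewrite (ord1 j) !mxE.
  by case: ifP; rewrite ?addr0 ?add0r.
case=> w1 w2 /= w1S w2C vw; rewrite /vS /vC vw; congr pair;
  apply/matrixP => i j;  rewrite (ord1 j) !mxE; case: (boolP (i \in S)) => iS.
- by rewrite (w2C i) ?addr0 // in_setC iS.
- by rewrite w1S.
- by rewrite (w2C i) // in_setC iS.
- by rewrite w1S ?add0r.
Qed.

Lemma nontrivial_supported S i : i \in S -> nontrivial_sub (supported S).
Proof.
move=> iS; exists (delta_mx i 0); split.
  by move=> j jS; rewrite mxE; case: (eqVneq j i) jS => // ->; rewrite iS.
by move/matrixP/(_ i 0); rewrite !mxE !eqxx => /eqP; rewrite oner_eq0.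
Qed.

End Supports.

Section Representation.
Variables (K : comNzSemiRingType) (gT : finGroupType) (n : nat).
Hypotheses (Kidem : idempotent_semiring K) (Ksf : semifield K).
Variable rho : gT -> 'M[K]_n.
Hypothesis rep : is_rep rho.

Lemma rhoM g h : rho (g * h)%g = rho g *m rho h.
Proof. by case: rep. Qed.

Lemma rho1 : rho 1%g = 1%:M.
Proof. by case: rep. Qed.

Lemma rhoVr g : rho g *m rho g^-1%g = 1%:M.
Proof. by rewrite -rhoM mulgV rho1. Qed.

Lemma rhoVl g : rho g^-1%g *m rho g = 1%:M.
Proof. by rewrite -rhoM mulVg rho1. Qed.

Lemma rho_inv_neq0 g i j : rho g i j != 0 -> rho g^-1%g j i != 0.
Proof. exact: (unitmx_inv_neq0 Kidem Ksf (rhoVr g) (rhoVl g)). Qed.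

Lemma rho_colE g i j :
  rho g i j != 0 -> col j (rho g) = rho g i j *: delta_mx i 0.
Proof. exact: (unitmx_colE Kidem Ksf (rhoVr g) (rhoVl g)). Qed.

Lemma rep_eigenvalue_eq1 h (c : K) (v : 'cV[K]_n) :
  v != 0 -> rho h *m v = c *: v -> c = 1.
Proof.
move=> v0 hv.
have hkv k : rho (h ^+ k)%g *m v = c ^+ k *: v.
  elim: k => [|k IH]; first by rewrite expg0 rho1 mul1mx expr0 scale1r.
  by rewrite expgS rhoM -mulmxA IH -scalemxAr hv scalerA -exprSr.
have [i vi0] : exists i, v i 0 != 0.
  apply/existsP; apply: contraNT v0 => /existsPn v0.
  by apply/eqP/matrixP => i j; rewrite (ord1 j) mxE; apply/eqP/negbNE.
apply: (idem_expr_eq1 Kidem Ksf (order_gt0 h)); apply: (sf_mulIf Ksf vi0).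
have := congr1 (fun w : 'cV[K]_n => w i 0) (hkv #[h]%g).
by rewrite expg_order rho1 mul1mx mxE mul1r => <-.
Qed.

Definition rho_closed (S : {set 'I_n}) :=
  forall g i j, rho g i j != 0 -> (i \in S) = (j \in S).

Lemma rho_closedC S : rho_closed S -> rho_closed (~: S).
Proof. by move=> closedS g i j gij; rewrite !in_setC (closedS g i j gij). Qed.

Lemma Gstable_supported S : rho_closed S -> Gstable rho (supported S).
Proof.
move=> closedS g v vS i iS; rewrite mxE big1 // => j _.
have [->|gij] := eqVneq (rho g i j) 0; first by rewrite mul0r.
by rewrite (closedS _ _ _ gij) in iS; rewrite vS ?mulr0.
Qed.

Lemma indecomposable_closed S i j :
  indecomposable rho -> rho_closed S -> i \in S -> j \in S.
Proof.
case=> _ indec closedS iS; apply/negPn/negP => jS; apply: indec.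
exists (supported S), (supported (~: S)); split.
- by split; apply: submod_supported.
- by split; apply: Gstable_supported; [|apply: rho_closedC].
- split; first exact: nontrivial_supported iS.
  by apply: (@nontrivial_supported _ _ _ j); rewrite in_setC.
- exact: direct_sum_supported.
Qed.

Definition orbit_idx i0 : {set 'I_n} := [set i | [exists g, rho g i i0 != 0]].

Lemma rho_closed_orbit i0 : rho_closed (orbit_idx i0).
Proof.
suff orbitS g i j : rho g i j != 0 -> j \in orbit_idx i0 -> i \in orbit_idx i0.
  move=> g i j gij; apply/idP/idP; first exact: orbitS (rho_inv_neq0 gij).
  exact: orbitS gij.
rewrite !inE => gij /existsP[h hj]; apply/existsP; exists (g * h)%g.
by rewrite rhoM (mulmx_neq0 Kidem Ksf gij hj).
Qed.

Lemma indecomposable_transitive i0 :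
  indecomposable rho -> forall i, exists g, rho g i i0 != 0.
Proof.
move=> indec i; apply/existsP; suff : i \in orbit_idx i0 by rewrite inE.
apply: (@indecomposable_closed _ i0) indec (rho_closed_orbit i0) _.
by rewrite inE; apply/existsP; exists 1%g; rewrite rho1 mxE eqxx oner_neq0.
Qed.

End Representation.

Section GroupSemiring.
Variables (K : comNzSemiRingType) (gT : finGroupType).
Implicit Types x y : KG K gT.

Lemma kg_expand x : x = \sum_g kg_scale (x g) (kg_delta K g).
Proof.
apply/ffunP => k; rewrite sum_ffunE (bigD1 k) //= big1 => [|g gk].
  by rewrite !ffunE eqxx mulr1 addr0.
by rewrite !ffunE eq_sym (negbTE gk) mulr0.
Qed.

Lemma kg_scale_suml (I : Type) (r : seq I) (P : pred I) (a : I -> K) x :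
  kg_scale (\sum_(i <- r | P i) a i) x = \sum_(i <- r | P i) kg_scale (a i) x.
Proof.
apply/ffunP => k; rewrite sum_ffunE !ffunE mulr_suml.
by apply: eq_bigr => i _; rewrite ffunE.
Qed.

Lemma kg_mulE z x : kg_mul z x = \sum_g kg_scale (z g) (kg_act g x).
Proof.
apply/ffunP => k; rewrite sum_ffunE ffunE.
by apply: eq_bigr => g _; rewrite !ffunE.
Qed.

Lemma kg_mul_scale1 (c : K) x :
  kg_mul (kg_scale c (kg_delta K 1%g)) x = kg_scale c x.
Proof.
apply/ffunP => k; rewrite !ffunE (bigD1 1%g) //= big1 => [|g g1].
  by rewrite !ffunE eqxx mulr1 invg1 mul1g addr0.
by rewrite !ffunE (negbTE g1) mulr0 mul0r.
Qed.

Section Congruence.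
Variable R : KG K gT -> KG K gT -> Prop.
Hypothesis congrR : kg_congr R.

Lemma kg_congrD x1 y1 x2 y2 : R x1 y1 -> R x2 y2 -> R (x1 + x2) (y1 + y2).
Proof.
case: congrR => _ _ Rtrans Radd _ R1 R2.
apply: (Rtrans _ (y1 + x2)); first exact: Radd.
by rewrite !(addrC y1); apply: Radd.
Qed.

Lemma kg_congr_sum (I : finType) (F G : I -> KG K gT) :
  (forall i, R (F i) (G i)) -> R (\sum_i F i) (\sum_i G i).
Proof.
by move=> FG; apply: big_ind2 => //; [case: congrR | apply: kg_congrD].
Qed.

Lemma kg_congr_scale (c : K) x y : R x y -> R (kg_scale c x) (kg_scale c y).
Proof.
case: congrR => _ _ _ _ Rmul /(Rmul _ _ (kg_scale c (kg_delta K 1%g))).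
by rewrite !kg_mul_scale1.
Qed.

End Congruence.
End GroupSemiring.

Section CosetModule.
Variables (K : comNzSemiRingType) (gT : finGroupType) (n : nat).
Hypotheses (Kidem : idempotent_semiring K) (Ksf : semifield K).
Variable rho : gT -> 'M[K]_n.
Hypothesis rep : is_rep rho.
Variable i0 : 'I_n.
Implicit Types x y : KG K gT.

Definition orbit_vec g : 'cV[K]_n := col i0 (rho g).

Lemma orbit_vecM g h : orbit_vec (g * h)%g = rho g *m orbit_vec h.
Proof. by rewrite /orbit_vec !colE (rhoM rep) mulmxA. Qed.

Lemma orbit_vec1_neq0 : orbit_vec 1 != 0.
Proof.
rewrite /orbit_vec (rho1 rep); apply/eqP => /matrixP/(_ i0 0).
by rewrite !mxE eqxx => /eqP; rewrite oner_eq0.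
Qed.

Definition idx g : 'I_n := odflt i0 [pick i | rho g i i0 != 0].

Lemma idx_neq0 g : rho g (idx g) i0 != 0.
Proof.
rewrite /idx; case: pickP => [//|none] /=.
by have [i] := unitmx_col_neq0 (rhoVl rep g) i0; rewrite none.
Qed.

Lemma orbit_vecE g : orbit_vec g = rho g (idx g) i0 *: delta_mx (idx g) 0.
Proof. exact: (rho_colE Kidem Ksf rep (idx_neq0 g)). Qed.

Lemma orbit_vec_idx g k : idx g = idx k -> orbit_vec g = orbit_vec k.
Proof.
move=> gk; have [b bb1] := Ksf (idx_neq0 g); rewrite gk in bb1.
set c := rho k (idx k) i0 * b.
have kg : orbit_vec k = c *: orbit_vec g.
  by rewrite !orbit_vecE gk scalerA -mulrA (mulrC b) bb1 mulr1.
have c1 : c = 1.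
  apply: (rep_eigenvalue_eq1 Kidem Ksf rep (h := (g^-1 * k)%g) orbit_vec1_neq0).
  by rewrite -orbit_vecM mulg1 orbit_vecM kg -scalemxAr -orbit_vecM mulVg.
by rewrite kg c1 scale1r.
Qed.

Definition stab := [set g | orbit_vec g == orbit_vec 1].

Lemma group_set_stab : group_set stab.
Proof.
apply/group_setP; split=> [|g h]; rewrite !inE // => /eqP gS /eqP hS.
by rewrite orbit_vecM hS -orbit_vecM mulg1 gS.
Qed.

Canonical stab_group := Group group_set_stab.

Lemma mem_stab_idx g k : idx g = idx k -> (g^-1 * k)%g \in stab.
Proof.
by move/orbit_vec_idx => gk; rewrite inE orbit_vecM -gk -orbit_vecM mulVg.
Qed.

Definition phi x : 'cV[K]_n := \sum_g x g *: orbit_vec g.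

Lemma phi0 : phi 0 = 0.
Proof. by rewrite /phi big1 // => g _; rewrite ffunE scale0r. Qed.

Lemma phiD x y : phi (kg_add x y) = phi x + phi y.
Proof.
by rewrite /phi -big_split; apply: eq_bigr => g _; rewrite ffunE scalerDl.
Qed.

Lemma phi_sum (I : finType) (F : I -> KG K gT) :
  phi (\sum_i F i) = \sum_i phi (F i).
Proof. exact: (big_morph phi phiD phi0). Qed.

Lemma phiZ c x : phi (kg_scale c x) = c *: phi x.
Proof.
by rewrite /phi scaler_sumr; apply: eq_bigr => g _; rewrite ffunE scalerA.
Qed.

Lemma phi_act g x : phi (kg_act g x) = rho g *m phi x.
Proof.
rewrite /phi mulmx_sumr (reindex_inj (mulgI g)) /=; apply: eq_bigr => k _.
by rewrite ffunE mulKg orbit_vecM scalemxAr.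
Qed.

Lemma phi_delta g : phi (kg_delta K g) = orbit_vec g.
Proof.
rewrite /phi (bigD1 g) //= big1 ?addr0 => [|k kg]; rewrite ffunE.
  by rewrite eqxx scale1r.
by rewrite (negbTE kg) scale0r.
Qed.

Lemma phi_eq_of_coset_congr x y : coset_congr stab_group x y -> phi x = phi y.
Proof.
move/(_ (fun a b => phi a = phi b)); apply=> [|g h].
- split=> [//|x1 y1 ->|x1 y1 z1 -> ->|x1 y1 z1 e|x1 y1 z1 e] //.
    by rewrite !phiD e.
  rewrite !kg_mulE !phi_sum; apply: eq_bigr => g _.
  by rewrite !phiZ !phi_act e.
- rewrite inE => /eqP hS.
  by rewrite !phi_delta orbit_vecM hS -orbit_vecM mulg1.
Qed.

Definition mass x i := \sum_(g | idx g == i) x g.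

Lemma phi_idx x k : phi x (idx k) 0 = mass x (idx k) * rho k (idx k) i0.
Proof.
rewrite /phi summxE /mass mulr_suml [RHS]big_mkcond /=.
apply: eq_bigr => g _.
rewrite mxE; case: eqP => [/orbit_vec_idx -> | gk]; first by rewrite mxE.
by rewrite orbit_vecE !mxE (eq_sym (idx k)) (introF eqP gk) /= mulr0n !mulr0.
Qed.

Lemma mass_phi x y : phi x = phi y -> forall i, mass x i = mass y i.
Proof.
move=> xy i; case: (pickP [pred g | idx g == i]) => [k /eqP <- | none].
  by apply: (sf_mulIf Ksf (idx_neq0 k)); rewrite -!phi_idx xy.
by rewrite /mass !big_pred0.
Qed.

Definition idx_rep i : gT := odflt 1%g [pick g | idx g == i].

Lemma idx_rep_idx g : idx (idx_rep (idx g)) = idx g.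
Proof.
by rewrite /idx_rep; case: pickP => [k /eqP //| /(_ g)]; rewrite eqxx.
Qed.

(* The fibres of [idx] are the left cosets of [stab]; the normal form moves the
   mass of each coset onto a single representative. *)
Definition normal_form x : KG K gT :=
  \sum_i kg_scale (mass x i) (kg_delta K (idx_rep i)).

Lemma congr_normal_form (R : KG K gT -> KG K gT -> Prop) x :
  kg_congr R ->
  (forall g h, h \in stab_group -> R (kg_delta K g) (kg_delta K (g * h)%g)) ->
  R x (normal_form x).
Proof.
move=> congrR gen.
have -> : normal_form x = \sum_g kg_scale (x g) (kg_delta K (idx_rep (idx g))).
  rewrite [RHS](partition_big idx predT) //=; apply: eq_bigr => i _.
  by rewrite kg_scale_suml; apply: eq_bigr => g /eqP ->.
rewrite {1}(kg_expand x); apply: (kg_congr_sum congrR) => g.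
apply: (kg_congr_scale congrR).
by have := gen g _ (mem_stab_idx (esym (idx_rep_idx g))); rewrite mulKVg.
Qed.

Lemma coset_congr_of_phi x y : phi x = phi y -> coset_congr stab_group x y.
Proof.
move=> xy R congrR gen; have [_ Rsym Rtrans _ _] := congrR.
have nfxy : normal_form x = normal_form y.
  by apply: eq_bigr => i _; rewrite (mass_phi xy).
apply: Rtrans (congr_normal_form x congrR gen) _.
by rewrite nfxy; apply: Rsym; apply: congr_normal_form.
Qed.

Lemma phi_surj :
  (forall i, exists g, rho g i i0 != 0) -> forall v, exists x, phi x = v.
Proof.
move=> transitive v.
have /fin_all_exists[e eE] : forall i, exists x, phi x = delta_mx i 0.
  move=> i; have [g gi] := transitive i; have [b bb1] := Ksf gi.
  exists (kg_scale b (kg_delta K g)).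
  rewrite phiZ phi_delta /orbit_vec (rho_colE Kidem Ksf rep gi).
  by rewrite scalerA mulrC bb1 scale1r.
exists (\sum_i kg_scale (v i 0) (e i)); rewrite phi_sum [RHS]matrix_sum_delta.
by apply: eq_bigr => i _; rewrite big_ord1 phiZ eE.
Qed.

End CosetModule.

Theorem lemma3p17 (gT : finGroupType) (K : comNzSemiRingType)
  (Kidem : idempotent_semiring K) (Ksf : semifield K)
  (n : nat) (rho : gT -> 'M[K]_n) (rep : is_rep rho)
  (indec : indecomposable rho) :
  exists (H : {group gT}) (phi : KG K gT -> 'cV[K]_n),
    [/\ (forall x y, phi (kg_add x y) = phi x + phi y),
        (forall (c : K) x, phi (kg_scale c x) = c *: phi x),
        (forall g x, phi (kg_act g x) = rho g *m phi x),
        (forall v, exists x, phi x = v) &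
        (forall x y, phi x = phi y <-> coset_congr H x y)].
Proof.
pose i0 : 'I_n := Ordinal (proj1 indec).
have transitive := indecomposable_transitive Kidem Ksf rep i0 indec.
exists (stab_group rep i0), (phi rho i0); split.
- exact: phiD.
- exact: phiZ.
- exact: (phi_act rep).
- exact: (phi_surj Kidem Ksf rep transitive).
- move=> x y; split; first exact: coset_congr_of_phi.
  exact: phi_eq_of_coset_congr.
Qed.
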